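(* Let $n,k$ be positive integers with $k\le n$. Then (a) $\mathfrak r_{\triangle_{n,k}}=\sum_{i=0}^{k-1}(-1)^{k+i-1}q_{n-i}\,q_i$; (b) $\mathfrak r_{\triangle_{n,n-k+1}}=\mathfrak r_{\triangle_{n,k}}$.
   Context: Boxes $(r,c)$ are indexed by row $r$ (top to bottom) and column $c$. A connected ribbon corresponding to a composition $\alpha=(\alpha_1,\dots,\alpha_\ell)$ is an edgewise connected set of boxes with $\alpha_r$ consecutive boxes in row $r$, where the leftmost box of row $r$ lies directly above the rightmost box of row $r+1$. Let $\mathbf{P}'=\{1'<1<2'<2<\cdots\}$. For a ribbon $D$, a marked filling is a filling of its boxes by letters of $\mathbf{P}'$ with rows and columns weakly increasing, each column containing at most one unmarked $k$ and each row at most one marked $k'$; the ribbon Schur $Q$-function $\mathfrak r_D$ is $\sum_T x^{c(T)}$ over all such fillings, with $c(T)_i$ the number of entries equal to $i$ or $i'$ (this equals the skew Schur $Q$-function $Q_{\lambda/\mu}$ whenever $D$ is the shifted skew diagram $\widetilde{\lambda/\mu}$). $q_m=Q_{(m)}$ is the Schur $Q$-function of the one-row shape, with $q_0=1$. For $1\le k\le n$, $\triangle_{n,k}$ denotes the ribbon of composition $(1^{k-1},n-k+1)$, i.e. $k-1$ rows of one box followed by a row of $n-k+1$ boxes (equivalently the shifted skew diagram of $\lambda=(n,n-1,\dots,n-k+1)$ over $\mu=(n-1,\dots,n-k+1)$, $\mu=\emptyset$ if $k=1$); thus $\triangle_{n,1}$ is a single row and $\triangle_{n,n}$ a single column of $n$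 boxes. *)

From HB Require Import structures.
From mathcomp Require Import all_boot all_order all_algebra.
Set Implicit Arguments. Unset Strict Implicit. Unset Printing Implicit Defensive.
Import Order.TTheory GRing.Theory Num.Theory.

(* Rows are 0-indexed from the top.  Row r occupies the columns
   start r, ..., start r + alpha_r - 1, where
   start r = sum_{j > r} (alpha_j - 1); thus the leftmost box of row r
   lies directly above the rightmost box of row r+1. *)
Definition ribbon_start (alpha : seq nat) (r : nat) : nat :=
  sumn (map (fun a => a.-1) (drop r.+1 alpha)).

Definition ribbon_cells (alpha : seq nat) : seq (nat * nat) :=
  flatten [seq [seq (r, ribbon_start alpha r + c) | c <- iota 0 (nth 0 alpha r)]
          | r <- iota 0 (size alpha)].

(* Marked alphabet restricted to the letters 1' < 1 < ... < N' < N,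
   encoded as j : 'I_(2*N): the letter j encodes (j/2 + 1)' if j is even
   (marked) and (j/2 + 1) if j is odd (unmarked).  The natural order on
   'I_(2*N) is the order of P'.  The variable attached to j is x (j./2)
   (variables are 0-indexed: x 0 = x_1, ...). *)
Definition unmarked N (j : 'I_(2 * N)) : bool := odd j.

Definition marked_filling (cells : seq (nat * nat)) N
    (T : {ffun 'I_(size cells) -> 'I_(2 * N)}) : bool :=
  [forall i : 'I_(size cells), forall j : 'I_(size cells),
    let ci := nth (0, 0) cells i in
    let cj := nth (0, 0) cells j in
    [&& ((ci.1 == cj.1) && (ci.2 < cj.2)%N) ==> (val (T i) <= val (T j))%N,
        ((ci.2 == cj.2) && (ci.1 < cj.1)%N) ==> (val (T i) <= val (T j))%N,
        ((i != j) && (ci.2 == cj.2) && (T i == T j)) ==> ~~ unmarked (T i) &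
        ((i != j) && (ci.1 == cj.1) && (T i == T j)) ==> ~~ ~~ unmarked (T i)]].

Definition ribbonQ (R : comRingType) (N : nat) (x : nat -> R) (alpha : seq nat) : R :=
  \sum_(T : {ffun 'I_(size (ribbon_cells alpha)) -> 'I_(2 * N)}
          | marked_filling T)
     \prod_(b : 'I_(size (ribbon_cells alpha))) x (val (T b))./2.

(* q_m = Q_(m): one-row ribbon; for m = 0 the diagram is empty and the
   value is 1, so q_0 = 1. *)
Definition qQ (R : comRingType) (N : nat) (x : nat -> R) (m : nat) : R :=
  ribbonQ N x [:: m].

Definition triangle (n k : nat) : seq nat := nseq k.-1 1%N ++ [:: (n - k).+1].

From HB Require Import structures.
From mathcomp Require Import all_boot all_order all_algebra.
From mathcomp Require Import zify ring.
Set Implicit Arguments. Unset Strict Implicit. Unset Printing Implicit Defensive.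
Import GRing.Theory.

(* The ribbon triangle_{n,k} is a hook: a column of k-1 boxes standing on the
   last box (the corner) of a row of n-k+1 boxes.  Along a row a marked
   filling is a chain u_1, u_2, ... of letters with u_i < u_j + [u_j unmarked]
   for i < j, and along a column the same with "marked" instead of
   "unmarked".
   This yields r_{n,k+1} + r_{n,k} = q_k q_{n-k} and r_{n,1} = r_{n,n} = q_n,
   from which part (a) follows by induction on k, and part (b) because the
   recurrence and its initial values are symmetric under k <-> n-k. *)

Section FinFunSums.
Variable R : comNzRingType.
Local Open Scope ring_scope.

Definition ffun_snoc (A : finType) m (g : {ffun 'I_m -> A}) (a : A) : {ffun 'I_m.+1 -> A} :=
  [ffun i => if unlift ord_max i is Some j then g j else a].

Lemma ffun_snoc_widen (A : finType) m (g : {ffun 'I_m -> A}) a (i : 'I_m) :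
  ffun_snoc g a (widen_ord (leqnSn m) i) = g i.
Proof.
have -> : widen_ord (leqnSn m) i = lift ord_max i.
  by apply: val_inj; rewrite /= /bump leqNgt ltn_ord.
by rewrite ffunE liftK.
Qed.

Lemma ffun_snoc_last (A : finType) m (g : {ffun 'I_m -> A}) a : ffun_snoc g a ord_max = a.
Proof. by rewrite ffunE unlift_none. Qed.

Lemma sum_ffun_snoc (A : finType) m (F : {ffun 'I_m.+1 -> A} -> R) :
  \sum_f F f = \sum_(g : {ffun 'I_m -> A}) \sum_(a : A) F (ffun_snoc g a).
Proof.
rewrite pair_big /= (reindex (fun p : {ffun 'I_m -> A} * A => ffun_snoc p.1 p.2)) //.
apply: onW_bij; exists (fun f : {ffun 'I_m.+1 -> A} => ([ffun j => f (lift ord_max j)], f ord_max)).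
  move=> [g a] /=; rewrite ffun_snoc_last; congr (_, _).
  by apply/ffunP => j; rewrite !ffunE liftK.
move=> f; apply/ffunP => i; rewrite ffunE.
by case: unliftP => [j ->|->] //; rewrite ffunE.
Qed.

Definition ffun_cat (A : finType) a b (g1 : {ffun 'I_a -> A}) (g2 : {ffun 'I_b -> A}) :
  {ffun 'I_(a + b) -> A} :=
  [ffun i => match split i with inl j => g1 j | inr j => g2 j end].

Lemma ffun_cat_lshift (A : finType) a b (g1 : {ffun 'I_a -> A}) (g2 : {ffun 'I_b -> A}) i :
  ffun_cat g1 g2 (lshift b i) = g1 i.
Proof. by rewrite ffunE (unsplitK (inl _ i)). Qed.

Lemma ffun_cat_rshift (A : finType) a b (g1 : {ffun 'I_a -> A}) (g2 : {ffun 'I_b -> A}) i :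
  ffun_cat g1 g2 (rshift a i) = g2 i.
Proof. by rewrite ffunE (unsplitK (inr _ i)). Qed.

Lemma sum_ffun_cat (A : finType) a b (F : {ffun 'I_(a + b) -> A} -> R) :
  \sum_f F f = \sum_(g1 : {ffun 'I_a -> A}) \sum_(g2 : {ffun 'I_b -> A}) F (ffun_cat g1 g2).
Proof.
rewrite pair_big /=.
rewrite (reindex (fun p : {ffun 'I_a -> A} * {ffun 'I_b -> A} => ffun_cat p.1 p.2)) //.
apply: onW_bij.
exists (fun f : {ffun 'I_(a + b) -> A} => ([ffun j => f (lshift b j)], [ffun j => f (rshift a j)])).
  by move=> [g1 g2] /=; congr (_, _); apply/ffunP => j;
    rewrite ffunE ?ffun_cat_lshift ?ffun_cat_rshift.
move=> f; apply/ffunP => i; rewrite ffunE.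
by case: splitP => j Hj; rewrite ffunE; congr (f _); apply: val_inj.
Qed.

Lemma sum_mul_pairs (I J : finType) (f : I -> R) (g : J -> R) (c : R) :
  \sum_i \sum_j f i * g j * c = c * (\sum_j g j) * (\sum_i f i).
Proof.
rewrite mulrC mulr_suml; apply: eq_bigr => i _.
rewrite mulrCA !mulr_sumr; apply: eq_bigr => j _; ring.
Qed.

End FinFunSums.

(* A finite function 'I_p -> 'I_q read as a nat-valued sequence (0 outside
   the domain); this lets index arithmetic be done on plain naturals. *)
Definition fnat p q (T : {ffun 'I_p -> 'I_q}) (i : nat) : nat :=
  if (insub i : option 'I_p) is Some j then val (T j) else 0.

Lemma fnatE p q (T : {ffun 'I_p -> 'I_q}) (i : 'I_p) : fnat T i = T i.
Proof. by rewrite /fnat valK. Qed.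

Lemma fnat_out p q (T : {ffun 'I_p -> 'I_q}) (i : nat) : p <= i -> fnat T i = 0.
Proof. by move=> h; rewrite /fnat insubF // ltnNge h. Qed.

Lemma fnat_snoc q m (g : {ffun 'I_m -> 'I_q}) a (i : nat) :
  fnat (ffun_snoc g a) i = if i < m then fnat g i else if i == m then val a else 0.
Proof.
case: (ltnP i m.+1) => hi; last by rewrite fnat_out //; case: ltngtP => //; lia.
rewrite -[i]/(val (Ordinal hi)) fnatE ffunE.
case: unliftP => [j ->|->] /=; last by rewrite ltnn eqxx.
have hj : j < m := ltn_ord j.
have -> : bump m j = j by rewrite /bump leqNgt hj.
by rewrite hj fnatE.
Qed.

Lemma fnat_cat q a b (g1 : {ffun 'I_a -> 'I_q}) (g2 : {ffun 'I_b -> 'I_q}) (i : nat) :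
  fnat (ffun_cat g1 g2) i = if i < a then fnat g1 i else fnat g2 (i - a).
Proof.
case: (ltnP i (a + b)) => hi.
  rewrite -[i]/(val (Ordinal hi)) fnatE ffunE.
  by case: splitP => j /= ->; rewrite ?addKn fnatE.
rewrite fnat_out //; case: ltnP => h; first lia.
by rewrite fnat_out //; lia.
Qed.

(* A t-chain is a sequence u_0, u_1, ... of letters of 'I_q with
   u_i < u_j + t u_j for i < j: weakly increasing, and a letter may repeat
   only if t holds for it.  With t = odd (repeat only unmarked letters) this
   is a marked filling of a row; with t = tcol (repeat only marked letters)
   it is a marked filling of a column. *)
Definition tcol (u : nat) : bool := ~~ odd u.

Definition chainb (t : nat -> bool) p q (T : {ffun 'I_p -> 'I_q}) : bool :=
  [forall i : 'I_p, forall j : 'I_p, (i < j) ==> (T i < T j + t (T j))].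

Definition boundb b p q (T : {ffun 'I_p -> 'I_q}) : bool := [forall i : 'I_p, T i < b].

Lemma chainP (t : nat -> bool) p q (T : {ffun 'I_p -> 'I_q}) :
  reflect (forall i j, i < j -> j < p -> fnat T i < fnat T j + t (fnat T j))
          (chainb t T).
Proof.
apply: (iffP forallP) => H.
  move=> i j hij hj; have hi : i < p by lia.
  have := forallP (H (Ordinal hi)) (Ordinal hj).
  by rewrite /= hij -(fnatE T (Ordinal hi)) -(fnatE T (Ordinal hj)).
move=> i; apply/forallP => j; apply/implyP => hij.
by have := H i j hij (ltn_ord j); rewrite !fnatE.
Qed.

Lemma boundP b p q (T : {ffun 'I_p -> 'I_q}) :
  reflect (forall i, i < p -> fnat T i < b) (boundb b T).
Proof.
apply: (iffP forallP) => H.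
  by move=> i hi; have := H (Ordinal hi); rewrite -(fnatE T (Ordinal hi)).
by move=> i; have := H i (ltn_ord i); rewrite fnatE.
Qed.

Lemma chain_snoc (t : nat -> bool) q m (g : {ffun 'I_m -> 'I_q}) a b :
  chainb t (ffun_snoc g a) && boundb b (ffun_snoc g a) =
  [&& chainb t g, boundb (a + t a) g & a < b].
Proof.
apply/idP/idP.
  move=> /andP [/chainP Hc /boundP Hb]; apply/and3P; split.
  - apply/chainP => i j hij hj; have := Hc i j hij (leqW hj).
    by rewrite !fnat_snoc hj (ltn_trans hij hj).
  - apply/boundP => i hi; have := Hc i m hi (ltnSn m).
    by rewrite !fnat_snoc hi ltnn eqxx.
  - by have := Hb m (ltnSn m); rewrite fnat_snoc ltnn eqxx.
move=> /and3P [/chainP Hc /boundP Hb hab]; apply/andP; split.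
  apply/chainP => i j hij hj; rewrite !fnat_snoc.
  case: (ltnP j m) => hjm; first by rewrite (ltn_trans hij hjm); apply: Hc.
  have ejm : j = m by lia.
  by subst j; rewrite eqxx hij Hb.
apply/boundP => i hi; rewrite fnat_snoc.
case: (ltnP i m) => him; first by have := Hb i him; case: (t a); lia.
have eim : i = m by lia.
by subst i; rewrite eqxx.
Qed.

Section ChainSums.
Variables (R : comNzRingType) (N : nat) (x : nat -> R).
Local Open Scope ring_scope.

Definition wt (u : 'I_(2 * N)) : R := x (val u)./2.

(* Generating function of the t-chains of length m with letters < b,
   computed by summing over the last letter u, which bounds the prefix by
   u + t u (see chain_snoc). *)
Fixpoint chain_sum (t : nat -> bool) (m b : nat) : R :=
  if m is m'.+1 then \sum_(u : 'I_(2 * N) | (u < b)%N) wt u * chain_sum t m' (u + t u)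
  else 1.

Lemma chain_sumE (t : nat -> bool) m b :
  \sum_(f : {ffun 'I_m -> 'I_(2 * N)} | chainb t f && boundb b f) \prod_i wt (f i)
  = chain_sum t m b.
Proof.
elim: m b => [|m IH] b.
  rewrite (big_pred1 (ffun0 (card_ord 0))) ?big_ord0 // => f /=.
  have -> : f = ffun0 (card_ord 0) by apply/ffunP => -[].
  by rewrite eqxx; apply/andP; split; apply/forallP => -[].
have peel (g : {ffun 'I_m -> 'I_(2 * N)}) (a : 'I_(2 * N)) :
  (if chainb t (ffun_snoc g a) && boundb b (ffun_snoc g a)
   then \prod_i wt (ffun_snoc g a i) else 0) =
  if (a < b)%N
  then wt a * (if chainb t g && boundb (a + t a) g then \prod_i wt (g i) else 0)
  else 0.
  rewrite chain_snoc big_ord_recr /= ffun_snoc_last.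
  under eq_bigr do rewrite ffun_snoc_widen.
  by case: (a < b)%N; rewrite ?andbF ?andbT //; case: (_ && _); rewrite ?mulr0 // mulrC.
rewrite /= big_mkcond sum_ffun_snoc.
rewrite (eq_bigr _ (fun g _ => eq_bigr _ (fun a _ => peel g a))) exchange_big /=.
rewrite [RHS]big_mkcond; apply: eq_bigr => a _.
case: (a < b)%N; last by rewrite big1.
by rewrite -mulr_sumr -big_mkcond IH.
Qed.

Lemma chain_sum_full t m :
  chain_sum t m.+1 (2 * N) = \sum_(u : 'I_(2 * N)) wt u * chain_sum t m (u + t u).
Proof. by rewrite /= (eq_bigl xpredT) // => u; rewrite ltn_ord. Qed.

Lemma chain_sum0 t m : chain_sum t m 0 = (m == 0)%:R.
Proof. by case: m => //= m; rewrite big_pred0 // => u; rewrite ltn0. Qed.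

Lemma chain_sumS t m b (hb : (b < 2 * N)%N) :
  chain_sum t m.+1 b.+1 = chain_sum t m.+1 b + wt (Ordinal hb) * chain_sum t m (b + t b).
Proof.
rewrite /= (bigD1 (Ordinal hb)) /= ?ltnSn // addrC; congr (_ + _).
apply: eq_bigl => u; rewrite ltnS -val_eqE /=.
by rewrite andbC -ltn_neqAle.
Qed.

(* The letters
   2i and 2i+1 both have weight x_i; comparing the recurrences of chain_sumS
   when the bound moves from 2i to 2i+2 shows, by induction on i and then on
   the length, that the two sums agree at every even bound. *)
Lemma row_col_sym_double i : (i <= N)%N -> forall m,
  chain_sum odd m i.*2 = chain_sum tcol m i.*2.
Proof.
elim: i => [_ m|i IH hi m]; first by rewrite !chain_sum0.
have hb0 : (i.*2 < 2 * N)%N by rewrite mul2n ltn_double.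
have hb1 : (i.*2.+1 < 2 * N)%N by rewrite mul2n; lia.
have w0 : wt (Ordinal hb0) = x i by rewrite /wt /= doubleK.
have w1 : wt (Ordinal hb1) = x i.
  have half1 : (i.*2.+1)./2 = i by rewrite -[i.*2.+1]/(true + i.*2)%N half_bit_double.
  by rewrite /wt /= -[in RHS]half1.
have IHi := IH (ltnW hi).
have col1 m' : chain_sum tcol m'.+1 i.*2.+1
    = chain_sum tcol m'.+1 i.*2 + x i * chain_sum tcol m' i.*2.+1.
  by rewrite chain_sumS w0 /tcol odd_double addn1.
have col2 m' : chain_sum tcol m'.+1 i.*2.+2
    = chain_sum tcol m'.+1 i.*2.+1 + x i * chain_sum tcol m' i.*2.+1.
  by rewrite chain_sumS w1 /tcol /= odd_double addn0.
have row1 m' : chain_sum odd m'.+1 i.*2.+1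
    = chain_sum odd m'.+1 i.*2 + x i * chain_sum odd m' i.*2.
  by rewrite chain_sumS w0 odd_double addn0.
have row2 m' : chain_sum odd m'.+1 i.*2.+2
    = chain_sum odd m'.+1 i.*2.+1 + x i * chain_sum odd m' i.*2.+2.
  by rewrite chain_sumS w1 /= odd_double addn1.
have col_lin m' : chain_sum tcol m' i.*2.+2
    = chain_sum tcol m' i.*2.+1 *+ 2 - chain_sum tcol m' i.*2.
  case: m' => [|m']; first by rewrite /= mulr2n addrK.
  rewrite col2 col1; ring.
rewrite doubleS; elim: m => [//|m IHm].
rewrite row2 row1 IHm col_lin col2 col1 !IHi; ring.
Qed.

Lemma row_col_sym m : chain_sum odd m (2 * N) = chain_sum tcol m (2 * N).
Proof. by rewrite mul2n row_col_sym_double. Qed.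

(* The generating function of hook fillings with r boxes in the row to the
   left of the corner and c boxes in the column above it, summed over the
   corner letter v. *)
Definition hook_sum (r c : nat) : R :=
  \sum_(v : 'I_(2 * N))
    wt v * chain_sum odd r (v + odd v) * chain_sum tcol c (v + tcol v).

Lemma hook_sum_row r : hook_sum r 0 = chain_sum odd r.+1 (2 * N).
Proof. by rewrite chain_sum_full; apply: eq_bigr => v _; rewrite /= mulr1. Qed.

Lemma hook_sum_col c : hook_sum 0 c = chain_sum tcol c.+1 (2 * N).
Proof. by rewrite chain_sum_full; apply: eq_bigr => v _; rewrite /= mulr1. Qed.

Lemma col_row_compl (u w : nat) : (w < u + tcol u)%N = ~~ (u < w + odd w)%N.
Proof.
rewrite /tcol; case: (ltngtP u w) => [h|h|->]; case: (odd u) (odd w) => -[] /=;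
  apply/idP/idP; lia.
Qed.

(* Pieri-type splitting: a column of a+1 boxes times a row of b+1 boxes.
   Let w and u be their last letters.  If w < u + tcol u the column goes on
   top of the row's last box, giving a hook (b, a+1); otherwise, by
   col_row_compl, the row goes to the left of the column's last box, giving
   a hook (b+1, a). *)
Lemma hook_product_split a b :
  chain_sum tcol a.+1 (2 * N) * chain_sum odd b.+1 (2 * N) = hook_sum b a.+1 + hook_sum b.+1 a.
Proof.
rewrite !chain_sum_full big_distrlr /= exchange_big /=.
under eq_bigr => u _ do
  rewrite (bigID (fun w : 'I_(2 * N) => (w < u + tcol u)%N)) /=.
rewrite big_split /=; congr (_ + _).
  apply: eq_bigr => u _ /=; rewrite mulr_sumr; apply: eq_bigr => w _; ring.
rewrite (eq_bigr _ (fun u _ => big_mkcond _ _)) exchange_big /=; apply: eq_bigr => w _.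
rewrite /= [in RHS]mulr_sumr [in RHS]mulr_suml [in RHS]big_mkcond; apply: eq_bigr => u _.
rewrite col_row_compl negbK; case: ifP => _; [ring | by rewrite ?mul0r].
Qed.

End ChainSums.

Definition fill_cond (i j : nat) (ci cj : nat * nat) (u w : nat) : bool :=
  [&& ((ci.1 == cj.1) && (ci.2 < cj.2)) ==> (u <= w),
      ((ci.2 == cj.2) && (ci.1 < cj.1)) ==> (u <= w),
      ((i != j) && (ci.2 == cj.2) && (u == w)) ==> ~~ odd u &
      ((i != j) && (ci.1 == cj.1) && (u == w)) ==> odd u].

Definition fillingb (cs : seq (nat * nat)) p q (T : {ffun 'I_p -> 'I_q}) : bool :=
  [forall i : 'I_p, forall j : 'I_p,
     fill_cond i j (nth (0, 0) cs i) (nth (0, 0) cs j) (T i) (T j)].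

Lemma fillingP cs p q (T : {ffun 'I_p -> 'I_q}) :
  reflect (forall i j, i < p -> j < p ->
             fill_cond i j (nth (0, 0) cs i) (nth (0, 0) cs j) (fnat T i) (fnat T j))
          (fillingb cs T).
Proof.
apply: (iffP forallP) => H.
  move=> i j hi hj; have := forallP (H (Ordinal hi)) (Ordinal hj).
  by rewrite -(fnatE T (Ordinal hi)) -(fnatE T (Ordinal hj)).
move=> i; apply/forallP => j.
by have := H i j (ltn_ord i) (ltn_ord j); rewrite !fnatE.
Qed.

Lemma fill_condI i j r1 c1 r2 c2 u w :
  (r1 = r2 -> c1 < c2 -> u < w + odd w) ->
  (r1 = r2 -> c2 < c1 -> w < u + odd u) ->
  (c1 = c2 -> r1 < r2 -> u < w + tcol w) ->
  (c1 = c2 -> r2 < r1 -> w < u + tcol u) ->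
  (r1 = r2 -> c1 = c2 -> i = j) ->
  fill_cond i j (r1, c1) (r2, c2) u w.
Proof.
rewrite /fill_cond /tcol /= => H1 H2 H3 H4 H5; apply/and4P; split; apply/implyP.
- by move=> /andP [/eqP e h]; have := H1 e h; lia.
- by move=> /andP [/eqP e h]; have := H3 e h; lia.
- move=> /andP [/andP [hij /eqP e] /eqP euw]; subst w.
  case: (ltngtP r1 r2) => h.
  + by have := H3 e h; case: (odd u) => /=; rewrite ?addn0 ?ltnn.
  + by have := H4 e h; case: (odd u) => /=; rewrite ?addn0 ?ltnn.
  + by rewrite H5 ?eqxx in hij.
- move=> /andP [/andP [hij /eqP e] /eqP euw]; subst w.
  case: (ltngtP c1 c2) => h.
  + by have := H1 e h; case: (odd u) => /=; rewrite ?addn0 ?ltnn.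
  + by have := H2 e h; case: (odd u) => /=; rewrite ?addn0 ?ltnn.
  + by rewrite H5 ?eqxx in hij.
Qed.

Lemma fill_cond_row i j r1 c1 r2 c2 u w :
  r1 = r2 -> c1 < c2 -> i != j -> fill_cond i j (r1, c1) (r2, c2) u w -> u < w + odd w.
Proof.
move=> <- h hij /and4P [h1 _ _ h4]; move: h1 h4; rewrite /= eqxx h hij /= => h1 h4.
case: (ltngtP u w) => huw; [lia | lia |].
by subst w; move: h4; rewrite eqxx /= => ->; rewrite addn1.
Qed.

Lemma fill_cond_col i j r1 c1 r2 c2 u w :
  c1 = c2 -> r1 < r2 -> i != j -> fill_cond i j (r1, c1) (r2, c2) u w -> u < w + tcol w.
Proof.
move=> <- h hij /and4P [_ h2 h3 _]; move: h2 h3; rewrite /= eqxx h hij /= => h2 h3.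
case: (ltngtP u w) => huw; [lia | lia |].
by subst w; move: h3; rewrite /tcol eqxx /= => ->; rewrite addn1.
Qed.

Lemma ribbon_cells_row m : ribbon_cells [:: m] = [seq (0, c) | c <- iota 0 m].
Proof. by rewrite /ribbon_cells /= cats0. Qed.

Lemma nth_row_cells m i : i < m -> nth (0, 0) [seq (0, c) | c <- iota 0 m] i = (0, i).
Proof. by move=> h; rewrite (nth_map 0) ?size_iota // nth_iota. Qed.

Definition hook_cells (a b : nat) : seq (nat * nat) :=
  [seq (r, b) | r <- iota 0 a] ++ [seq (a, c) | c <- iota 0 b.+1].

Lemma size_hook_cells a b : size (hook_cells a b) = (a + b).+1.
Proof. by rewrite size_cat !size_map !size_iota addnS. Qed.

Lemma flatten_singletons (T U : Type) (f : T -> U) s :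
  flatten [seq [:: f r] | r <- s] = map f s.
Proof. by elim: s => //= r s ->. Qed.

Lemma ribbon_cells_hook a b : ribbon_cells (nseq a 1 ++ [:: b.+1]) = hook_cells a b.
Proof.
rewrite /ribbon_cells size_cat size_nseq iotaD map_cat flatten_cat add0n.
congr (_ ++ _); last first.
  rewrite /= nth_cat size_nseq ltnn subnn /ribbon_start drop_cat size_nseq.
  by rewrite ltnNge leqnSn /= subSnn cats0.
rewrite -(flatten_singletons (fun r => (r, b))); congr flatten; apply/eq_in_map => r.
rewrite mem_iota add0n => /andP [_ hr].
rewrite nth_cat size_nseq hr nth_nseq hr /= /ribbon_start drop_cat size_nseq.
case: ltnP => h.
  by rewrite drop_nseq map_cat map_nseq sumn_cat sumn_nseq /= mul0n addn0 add0n addn0.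
have ea : a = r.+1 by lia.
by subst a; rewrite subnn drop0 /= !addn0.
Qed.

Definition hook_cell (a b i : nat) : nat * nat :=
  if i < a then (i, b) else (a, i - a).

Lemma nth_hook_cells a b i : i <= a + b ->
  nth (0, 0) (hook_cells a b) i = hook_cell a b i.
Proof.
move=> h; rewrite /hook_cell nth_cat size_map size_iota; case: ltnP => hi.
  by rewrite (nth_map 0) ?size_iota // nth_iota.
by rewrite (nth_map 0) ?size_iota ?nth_iota //; lia.
Qed.

Section HookFillings.
Variables (a b q : nat) (g1 : {ffun 'I_a -> 'I_q}) (g2 : {ffun 'I_b -> 'I_q}) (v : 'I_q).

Definition hook_val (i : nat) : nat :=
  if i < a then fnat g1 i else if i < a + b then fnat g2 (i - a) else val v.

Lemma hook_fillingP :
  reflect (forall i j, i <= a + b -> j <= a + b ->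
             fill_cond i j (hook_cell a b i) (hook_cell a b j) (hook_val i) (hook_val j))
          (fillingb (hook_cells a b) (ffun_snoc (ffun_cat g1 g2) v)).
Proof.
have fnat_hook i : i <= a + b -> fnat (ffun_snoc (ffun_cat g1 g2) v) i = hook_val i.
  move=> h; rewrite fnat_snoc fnat_cat /hook_val; case: (ltnP i (a + b)) => h1.
    by case: ltnP.
  have -> : i == a + b by apply/eqP; lia.
  by rewrite ltnNge (leq_trans (leq_addr b a) h1).
apply: (iffP (fillingP _ _)) => H i j hi hj.
  by have := H i j hi hj; rewrite !nth_hook_cells // !fnat_hook.
by rewrite !nth_hook_cells // !fnat_hook //; apply: H.
Qed.

Lemma hook_filling_chains :
  fillingb (hook_cells a b) (ffun_snoc (ffun_cat g1 g2) v) ->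
  [&& chainb tcol g1, boundb (v + tcol v) g1, chainb odd g2 & boundb (v + odd v) g2].
Proof.
move/hook_fillingP => H; rewrite /hook_cell /hook_val in H.
apply/and4P; split.
- apply/chainP => i j hij hj; have := H i j ltac:(lia) ltac:(lia).
  by rewrite hj (ltn_trans hij hj); apply: fill_cond_col => //; lia.
- apply/boundP => i hi; have := H i (a + b) ltac:(lia) ltac:(lia).
  have e2 : (a + b < a) = false by lia.
  by rewrite hi e2 ltnn /= addKn; apply: fill_cond_col => //; lia.
- apply/chainP => i j hij hj; have := H (a + i) (a + j) ltac:(lia) ltac:(lia).
  have e1 : (a + i < a) = false by lia.
  have e2 : (a + j < a) = false by lia.
  have e3 : (a + i < a + b) by lia.
  have e4 : (a + j < a + b) by lia.
  by rewrite e1 e2 e3 e4 !addKn; apply: fill_cond_row => //; lia.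
- apply/boundP => i hi; have := H (a + i) (a + b) ltac:(lia) ltac:(lia).
  have e1 : (a + i < a) = false by lia.
  have e2 : (a + b < a) = false by lia.
  have e3 : (a + i < a + b) by lia.
  by rewrite e1 e2 e3 ltnn !addKn; apply: fill_cond_row => //; lia.
Qed.

Lemma chains_hook_filling :
  [&& chainb tcol g1, boundb (v + tcol v) g1, chainb odd g2 & boundb (v + odd v) g2] ->
  fillingb (hook_cells a b) (ffun_snoc (ffun_cat g1 g2) v).
Proof.
move=> /and4P [/chainP c1 /boundP b1 /chainP c2 /boundP b2]; apply/hook_fillingP => i j hi hj.
rewrite /hook_cell /hook_val.
case: (ltnP i a) => hia; case: (ltnP j a) => hja; apply: fill_condI => /=;
  try (move=> *; lia).
- by move=> _ hij; apply: c1 hij hja.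
- by move=> _ hji; apply: c1 hji hia.
- move=> e _; have -> : (j < a + b) = false by lia.
  exact: b1 hia.
- move=> e _; have -> : (i < a + b) = false by lia.
  exact: b1 hja.
- move=> _ hij; have -> : i < a + b by lia.
  by case: (ltnP j (a + b)) => hjb; [apply: c2 | apply: b2]; lia.
- move=> _ hji; have -> : j < a + b by lia.
  by case: (ltnP i (a + b)) => hib; [apply: c2 | apply: b2]; lia.
Qed.

End HookFillings.

Section RibbonsAsChains.
Variables (R : comNzRingType) (N : nat) (x : nat -> R).
Local Open Scope ring_scope.

Lemma ribbonQE alpha p (e : size (ribbon_cells alpha) = p) :
  ribbonQ N x alpha =
  \sum_(T : {ffun 'I_p -> 'I_(2 * N)} | fillingb (ribbon_cells alpha) T) \prod_i wt x (T i).
Proof.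
subst p; apply: eq_bigl => T.
rewrite /marked_filling /fillingb; apply: eq_forallb => i; apply: eq_forallb => j.
by rewrite /fill_cond /unmarked negbK -!val_eqE.
Qed.

Lemma qQ_chain_sum m : qQ N x m = chain_sum N x odd m (2 * N).
Proof.
rewrite /qQ (ribbonQE (p := m)); last by rewrite ribbon_cells_row size_map size_iota.
rewrite -chain_sumE; apply: eq_bigl => T.
have -> : boundb (2 * N) T by apply/forallP => i; exact: ltn_ord.
rewrite andbT ribbon_cells_row; apply/idP/idP.
  move/fillingP => H; apply/chainP => i j hij hj.
  have hi := ltn_trans hij hj.
  have := H i j hi hj; rewrite !nth_row_cells //.
  by apply: fill_cond_row => //; rewrite neq_ltn hij.
move/chainP => H; apply/fillingP => i j hi hj; rewrite !nth_row_cells //.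
by apply: fill_condI => // _ hlt; apply: H.
Qed.

Lemma ribbonQ_hook a b : ribbonQ N x (nseq a 1 ++ [:: b.+1]) = hook_sum N x b a.
Proof.
rewrite (ribbonQE (p := (a + b).+1)); last by rewrite ribbon_cells_hook size_hook_cells.
rewrite ribbon_cells_hook big_mkcond sum_ffun_snoc sum_ffun_cat.
have factor (g1 : {ffun 'I_a -> 'I_(2 * N)}) (g2 : {ffun 'I_b -> 'I_(2 * N)}) v :
  (if fillingb (hook_cells a b) (ffun_snoc (ffun_cat g1 g2) v)
   then \prod_i wt x (ffun_snoc (ffun_cat g1 g2) v i) else 0) =
  (if chainb tcol g1 && boundb (v + tcol v) g1 then \prod_i wt x (g1 i) else 0) *
  (if chainb odd g2 && boundb (v + odd v) g2 then \prod_i wt x (g2 i) else 0) * wt x v.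
  have -> : \prod_(i < (a + b).+1) wt x (ffun_snoc (ffun_cat g1 g2) v i) =
      (\prod_i wt x (g1 i)) * (\prod_i wt x (g2 i)) * wt x v.
    rewrite big_ord_recr /= ffun_snoc_last big_split_ord /=; congr (_ * _ * _);
      by apply: eq_bigr => i _; rewrite ffun_snoc_widen ?ffun_cat_lshift ?ffun_cat_rshift.
  have [Hf | Hnf] := boolP (fillingb (hook_cells a b) (ffun_snoc (ffun_cat g1 g2) v)).
    by case/and4P: (hook_filling_chains Hf) => -> -> -> ->.
  move: (@chains_hook_filling _ _ _ g1 g2 v); rewrite (negbTE Hnf).
  case: (chainb tcol g1); case: (boundb (v + tcol v) g1);
    case: (chainb odd g2); case: (boundb (v + odd v) g2) => /= Hc;
    rewrite ?mulr0 ?mul0r //.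
  by have := Hc isT.
under eq_bigr do under eq_bigr do under eq_bigr do rewrite factor.
under eq_bigr do rewrite exchange_big.
rewrite exchange_big; apply: eq_bigr => v _.
rewrite -(chain_sumE N x odd) -(chain_sumE N x tcol) [in RHS]big_mkcond [in RHS]big_mkcond /=.
by rewrite sum_mul_pairs [X in _ = _ * X]big_mkcond.
Qed.

End RibbonsAsChains.

Section Triangles.
Variables (R : comNzRingType) (N : nat) (x : nat -> R) (n : nat).
Local Open Scope ring_scope.

Local Notation q m := (qQ N x m).
Local Notation r k := (ribbonQ N x (triangle n k)).

Lemma triangle_hook k : r k = hook_sum N x (n - k) k.-1.
Proof. exact: ribbonQ_hook. Qed.

(* The basic recurrence r_{n,k+1} + r_{n,k} = q_k q_{n-k}, from splitting
   the product of a column of k boxes and a row of n-k boxes. *)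
Lemma triangle_recurrence k : (0 < k)%N -> (k < n)%N -> r k.+1 + r k = q k * q (n - k).
Proof.
case: k => [//|a] _ lt_an; rewrite !triangle_hook !qQ_chain_sum row_col_sym.
have [b eb] : exists b, (n - a.+1 = b.+1)%N by exists (n - a.+1).-1; lia.
have -> : (n - a.+2 = b)%N by lia.
by rewrite eb hook_product_split.
Qed.

Lemma triangle_first : (0 < n)%N -> r 1 = q n.
Proof.
by move=> n_gt0; rewrite triangle_hook hook_sum_row qQ_chain_sum subn1 prednK.
Qed.

Lemma triangle_last : (0 < n)%N -> r n = q n.
Proof.
move=> n_gt0; rewrite triangle_hook subnn hook_sum_col qQ_chain_sum row_col_sym.
by rewrite prednK.
Qed.

(* Part (a): unroll the recurrence starting from r_{n,1} = q_n. *)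
Lemma triangle_alternating_sum k : (0 < k)%N -> (k <= n)%N ->
  r k = \sum_(i < k) (-1) ^+ (k + i - 1) * q (n - i) * q i.
Proof.
elim: k => [//|k IH] _ le_kn.
case: k IH le_kn => [_ n_gt0|k IH lt_kn].
  by rewrite triangle_first // big_ord1 subn0 [q 0]qQ_chain_sum /= mulr1 expr0 mul1r.
have -> : r k.+2 = q k.+1 * q (n - k.+1) - r k.+1.
  by rewrite -(triangle_recurrence _ lt_kn) // addrK.
have sign_last : (-1) ^+ (k.+2 + k.+1 - 1) = 1 :> R.
  by rewrite (_ : k.+2 + k.+1 - 1 = 2 * k.+1)%N ?exprM ?sqrrN ?expr1n //; lia.
rewrite IH ?(ltnW lt_kn) // [in RHS]big_ord_recr /= sign_last mul1r [in LHS]addrC.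
congr (_ + _); last exact: mulrC.
rewrite -sumrN; apply: eq_bigr => i _.
have -> : (k.+2 + i - 1 = (k.+1 + i - 1).+1)%N by lia.
by rewrite exprS !mulNr mul1r.
Qed.

(* Part (b): the recurrence is symmetric under k <-> n-k, and so are its
   initial values r_{n,1} = r_{n,n}. *)
Lemma triangle_symmetry k : (0 < k)%N -> (k <= n)%N -> r (n - k + 1) = r k.
Proof.
elim: k => [//|k IH] _ le_kn.
case: k IH le_kn => [_ n_gt0|k IH lt_kn].
  by rewrite subn1 addn1 prednK // triangle_last // triangle_first.
have rec_k := triangle_recurrence (ltn0Sn k) lt_kn.
have rec_nk := triangle_recurrence (k := (n - k.+1)%N) ltac:(lia) ltac:(lia).
rewrite -addn1 IH ?(ltnW lt_kn) // in rec_nk.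
have -> : (n - k.+2 + 1 = n - k.+1)%N by lia.
rewrite (_ : n - (n - k.+1) = k.+1)%N in rec_nk; last by lia.
by apply: (addIr (r k.+1)); rewrite rec_k addrC rec_nk mulrC.
Qed.

End Triangles.

Local Open Scope ring_scope.

Theorem mainTheorem9 (n k : nat) (hk : (0 < k)%N) (hkn : (k <= n)%N) :
  forall (R : comRingType) (N : nat) (x : nat -> R),
    ribbonQ N x (triangle n k) =
      \sum_(i < k) (-1) ^+ (k + i - 1) * qQ N x (n - i) * qQ N x i
    /\ ribbonQ N x (triangle n (n - k + 1)) = ribbonQ N x (triangle n k).
Proof.
move=> R N x; split.
- exact: triangle_alternating_sum.
- exact: triangle_symmetry.
Qed.
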